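(* Consider the domain-incremental setting described in the context, with arbitrary TII, WTP and TAP predictors and an arbitrary measurable weight function $\gamma$. Let $\delta,\epsilon,\eta\ge0$. If $\mathbb{E}_{\boldsymbol{x}\sim\mu}[H^{\gamma}_{\rm WTP}(\boldsymbol{x})]\le\delta$, $\mathbb{E}_{\boldsymbol{x}\sim\mu}[H^{\gamma}_{\rm TII}(\boldsymbol{x})]\le\epsilon$ and $\mathbb{E}_{\boldsymbol{x}\sim\mu}[H_{\rm TAP}(\boldsymbol{x})]\le\eta$, then the loss error satisfies $\mathcal L\in[0,\max\{\delta+\epsilon+\log t,\ \eta\}]$.
   Context: Domain-incremental setting (DIL). Fix integers $t\ge1$ (tasks/domains) and $m\ge1$; every task has the same class set $[m]$. Let $\mu$ be a probability distribution on an input space; each input $\boldsymbol{x}$ has a ground-truth domain $\bar i(\boldsymbol{x})\in[t]$ and a ground-truth class $\bar j(\boldsymbol{x})\in[m]$. A model provides, measurably in $\boldsymbol{x}$: a TII probability distribution $\big(P(\boldsymbol{x}\in\mathcal X_i\mid\mathcal D,\theta)\big)_{i\in[t]}$ on $[t]$; for each $i\in[t]$ a WTP probability distribution $\big(P(\boldsymbol{x}\in\mathcal X_{i,j}\mid\boldsymbol{x}\in\mathcal X_i,\mathcal D,\theta)\big)_{j\in[m]}$ on $[m]$; the induced DIL prediction $P(\boldsymbol{x}\in\mathcal X_{*,j}\mid\mathcal D,\theta)=\sum_{i\in[t]}P(\boldsymbol{x}\in\mathcal X_{i,j}\mid\boldsymbol{x}\in\mathcal X_i,\mathcal D,\theta)\,P(\boldsymbol{x}\in\mathcal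 X_i\mid\mathcal D,\theta)$ for $j\in[m]$; and a TAP probability distribution $\big(P(\boldsymbol{x}\in\mathcal X^{c}\mid\mathcal D,\theta)\big)_{c\in[m]}$ on $[m]$ (produced separately). A weight function $\gamma$ assigns to each $\boldsymbol{x}$ a point $\gamma(\boldsymbol{x})=(\gamma_i)_{i\in[t]}$ of the probability simplex on $[t]$. With conventions $-\log0=+\infty$ and $0\cdot(+\infty)=0$, define $H^{\gamma}_{\rm WTP}(\boldsymbol{x})=-\sum_{i}\gamma_i\log P(\boldsymbol{x}\in\mathcal X_{i,\bar j}\mid\boldsymbol{x}\in\mathcal X_i,\mathcal D,\theta)$, $H^{\gamma}_{\rm TII}(\boldsymbol{x})=-\sum_i\gamma_i\log P(\boldsymbol{x}\in\mathcal X_i\mid\mathcal D,\theta)$, $H_{\rm TAP}(\boldsymbol{x})=-\log P(\boldsymbol{x}\in\mathcal X^{\bar j}\mid\mathcal D,\theta)$, where $\bar j=\bar j(\boldsymbol{x})$. The loss error is $\mathcal L=\max\{\mathbb{E}_{\boldsymbol{x}\sim\mu}[-\log P(\boldsymbol{x}\in\mathcal X_{*,\bar j}\mid\mathcal D,\theta)],\ \mathbb{E}_{\boldsymbol{x}\sim\mu}[H_{\rm TAP}(\boldsymbol{x})]\}$. *)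

From HB Require Import structures.
From mathcomp Require Import all_boot all_order all_algebra.
From mathcomp Require Import all_classical all_reals all_analysis.
Set Implicit Arguments. Unset Strict Implicit. Unset Printing Implicit Defensive.
Import Order.TTheory GRing.Theory Num.Theory.
Local Open Scope ring_scope.
Local Open Scope ereal_scope.

Definition neglog {R : realType} (p : R) : \bar R :=
  if p == 0%R then +oo else (- ln p)%:E.

Definition is_distr {R : realType} (I : finType) (p : I -> R) : Prop :=
  (forall i, 0 <= p i)%R /\ (\sum_(i : I) p i = 1)%R.

(* DIL prediction P(x in X_{*,j}) = sum_i WTP(j|i) TII(i) *)
Definition dil_pred {R : realType} {T : Type} (t m : nat)
  (TII : T -> 'I_t -> R) (WTP : T -> 'I_t -> 'I_m -> R) (x : T) (j : 'I_m) : R :=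
  (\sum_(i < t) WTP x i j * TII x i)%R.

(* H^gamma_WTP(x); in \bar R, 0 * +oo = 0 *)
Definition H_WTP {R : realType} {T : Type} (t m : nat)
  (WTP : T -> 'I_t -> 'I_m -> R) (gamma : T -> 'I_t -> R) (jbar : T -> 'I_m)
  (x : T) : \bar R :=
  \sum_(i < t) ((gamma x i)%:E * neglog (WTP x i (jbar x))).

Definition H_TII {R : realType} {T : Type} (t : nat)
  (TII : T -> 'I_t -> R) (gamma : T -> 'I_t -> R) (x : T) : \bar R :=
  \sum_(i < t) ((gamma x i)%:E * neglog (TII x i)).

Definition H_TAP {R : realType} {T : Type} (m : nat)
  (TAP : T -> 'I_m -> R) (jbar : T -> 'I_m) (x : T) : \bar R :=
  neglog (TAP x (jbar x)).

Definition loss_error {R : realType} {d : measure_display} {T : measurableType d}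
  (mu : probability T R) (t m : nat)
  (TII : T -> 'I_t -> R) (WTP : T -> 'I_t -> 'I_m -> R) (TAP : T -> 'I_m -> R)
  (jbar : T -> 'I_m) : \bar R :=
  maxe (\int[mu]_x neglog (dil_pred TII WTP x (jbar x)))
       (\int[mu]_x H_TAP TAP jbar x).

(* The DIL prediction is a sum of the products WTP_i * TII_i, so its -log is at most
   the smallest -log (WTP_i * TII_i), hence at most any gamma-weighted average of them.
   Since -log turns products into sums, this average splits pointwise into
   H^gamma_WTP + H^gamma_TII, and integrating bounds the first loss by delta + eps,
   which is below delta + eps + log t. *)
From HB Require Import structures.
From mathcomp Require Import all_boot all_order all_algebra.
From mathcomp Require Import all_classical all_reals all_analysis.
From mathcomp Require Import measurable_realfun.
Import Order.TTheory GRing.Theory Num.Theory.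
Local Open Scope ring_scope.
Local Open Scope classical_set_scope.

Section neglog.
Context {R : realType}.
Local Open Scope ereal_scope.

Lemma neglog_ge0 (p : R) : (p <= 1)%R -> 0 <= neglog p.
Proof.
move=> p_le1; rewrite /neglog; case: eqP => // _.
by rewrite lee_fin oppr_ge0 ln_le0.
Qed.

Lemma neglog_le (p q : R) : (0 <= p)%R -> (p <= q)%R -> neglog q <= neglog p.
Proof.
move=> p_ge0 pq; rewrite /neglog.
have [_|p_neq0] := eqVneq p 0%R; first exact: leey.
have p_gt0 : (0 < p)%R by rewrite lt_def p_neq0.
have q_gt0 : (0 < q)%R := lt_le_trans p_gt0 pq.
by rewrite (gt_eqF q_gt0) lee_fin lerN2 ler_ln ?posrE.
Qed.

Lemma neglogM (p q : R) : (0 <= p)%R -> (0 <= q)%R ->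
  neglog (p * q) = neglog p + neglog q.
Proof.
move=> p_ge0 q_ge0; rewrite /neglog.
have [->|p_neq0] := eqVneq p 0%R; first by rewrite mul0r eqxx addye //; case: ifP.
have [->|q_neq0] := eqVneq q 0%R; first by rewrite mulr0 eqxx addey.
rewrite mulf_eq0 (negbTE p_neq0) (negbTE q_neq0) /= lnM ?posrE ?lt_def ?p_neq0 ?q_neq0 //.
by rewrite -EFinD opprD.
Qed.

End neglog.

Section distr.
Context {R : realType} {I : finType}.

Lemma distr_ge0 (p : I -> R) i : is_distr p -> 0 <= p i.
Proof. by case. Qed.

Lemma distr_le1 (p : I -> R) i : is_distr p -> p i <= 1.
Proof.
move=> [p_ge0 p_sum1]; rewrite -p_sum1 (bigD1 i) //= lerDl.
by apply: sumr_ge0 => j _.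
Qed.

Lemma distr_wavg_le1 (p : I -> R) (w : I -> R) :
  is_distr w -> (forall i, 0 <= p i <= 1) -> \sum_i p i * w i <= 1.
Proof.
move=> [w_ge0 w_sum1] p01; rewrite -w_sum1; apply: ler_sum => i _.
by have /andP[_ p_le1] := p01 i; rewrite ler_piMl.
Qed.

(* Go through -log of the largest term, which is dominated by every average. *)
Lemma neglog_sum_le_wavg (c w : I -> R) : (forall i, 0 <= c i) -> is_distr w ->
  (neglog (\sum_i c i) <= \sum_i (w i)%:E * neglog (c i))%E.
Proof.
move=> c_ge0 [w_ge0 w_sum1].
case: (pickP (fun _ : I => true)) => [i0 _|I_empty]; last first.
  by move/eqP: w_sum1; rewrite big_pred0 // eq_sym oner_eq0.
have [imin _ min_imin] := @arg_minP _ _ _ i0 xpredT (fun i => neglog (c i)) isT.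
apply: (@le_trans _ _ (neglog (c imin))).
  by apply: neglog_le => //; rewrite (bigD1 imin) //= lerDl sumr_ge0.
apply: (@le_trans _ _ (\sum_i (w i)%:E * neglog (c imin))%E).
  rewrite -ge0_sume_distrl; last by move=> i _; rewrite lee_fin.
  by rewrite sumEFin w_sum1 mul1e.
by apply: lee_sum => i _; rewrite lee_wpmul2l ?lee_fin ?min_imin.
Qed.

End distr.

Section measurability.
Context {R : realType} {d : measure_display} {T : measurableType d}.

Lemma measurable_neglog (f : T -> R) : measurable_fun setT f ->
  measurable_fun setT (fun x => neglog (f x)).
Proof.
move=> mf; apply: measurable_fun_ifT.
- exact: measurable_fun_eqr.
- exact: measurable_cst.
- by apply/measurable_EFinP; apply: measurableT_comp => //; exact: measurableT_comp.
Qed.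

Lemma measurable_fun_at_index {I : finType} (k : T -> I) (F : T -> I -> R) :
  (forall i, measurable (k @^-1` [set i])) ->
  (forall i, measurable_fun setT (fun x => F x i)) ->
  measurable_fun setT (fun x => F x (k x)).
Proof.
move=> mk mF.
have -> : (fun x => F x (k x)) =
    (fun x => \sum_(i <- enum I) (if k x == i then F x i else 0))%R.
  apply/funext => x; rewrite big_enum /= (bigD1 (k x)) //= eqxx big1 ?addr0 //.
  by move=> i /negbTE; rewrite eq_sym => ->.
apply: measurable_sum => i; apply: measurable_fun_ifT => //.
apply: (@measurable_fun_bool _ _ _ _ true); rewrite setTI.
by rewrite (_ : _ @^-1` _ = k @^-1` [set i]) //; apply/seteqP; split => x /= /eqP.
Qed.

End measurability.

Lemma ge0_le_integralD {R : realType} {d : measure_display} {T : measurableType d}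
    (mu : {measure set T -> \bar R}) (f g h : T -> \bar R) :
  (forall x, 0 <= f x)%E -> (forall x, 0 <= g x)%E -> (forall x, 0 <= h x)%E ->
  measurable_fun setT f -> measurable_fun setT g -> measurable_fun setT h ->
  (forall x, f x <= g x + h x)%E ->
  (\int[mu]_x f x <= \int[mu]_x g x + \int[mu]_x h x)%E.
Proof.
move=> f_ge0 g_ge0 h_ge0 mf mg mh fgh.
rewrite -(@ge0_integralD _ _ _ mu setT measurableT g h) //.
by apply: ge0_le_integral => //; exact: emeasurable_funD.
Qed.

Section dil.
Context {R : realType} {d : measure_display} {T : measurableType d} {t m : nat}.
Variables (TII : T -> 'I_t -> R) (WTP : T -> 'I_t -> 'I_m -> R).
Variables (gamma : T -> 'I_t -> R) (jbar : T -> 'I_m).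
Hypothesis dTII : forall x, is_distr (TII x).
Hypothesis dWTP : forall x i, is_distr (WTP x i).
Hypothesis dgamma : forall x, is_distr (gamma x).
Local Open Scope ereal_scope.

Lemma dil_pred_le1 x j : (dil_pred TII WTP x j <= 1)%R.
Proof.
apply: distr_wavg_le1 => // i.
by rewrite distr_ge0 ?distr_le1.
Qed.

Lemma H_WTP_ge0 x : 0 <= H_WTP WTP gamma jbar x.
Proof.
apply: sume_ge0 => i _; apply: mule_ge0; first by rewrite lee_fin distr_ge0.
exact/neglog_ge0/distr_le1.
Qed.

Lemma H_TII_ge0 x : 0 <= H_TII TII gamma x.
Proof.
apply: sume_ge0 => i _; apply: mule_ge0; first by rewrite lee_fin distr_ge0.
exact/neglog_ge0/distr_le1.
Qed.

Lemma neglog_dil_pred_le x :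
  neglog (dil_pred TII WTP x (jbar x)) <= H_WTP WTP gamma jbar x + H_TII TII gamma x.
Proof.
have c_ge0 i : (0 <= WTP x i (jbar x) * TII x i)%R by rewrite mulr_ge0 ?distr_ge0.
rewrite /dil_pred; apply: (le_trans (neglog_sum_le_wavg _ _ c_ge0 (dgamma x))).
rewrite /H_WTP /H_TII -big_split /=; apply: lee_sum => i _.
rewrite neglogM ?distr_ge0 // ge0_muleDr ?lee_fin ?distr_ge0 //.
  exact/neglog_ge0/distr_le1.
exact/neglog_ge0/distr_le1.
Qed.

Hypothesis mjbar : forall j, measurable (jbar @^-1` [set j]).
Hypothesis mTII : forall i, measurable_fun setT (fun x => TII x i).
Hypothesis mWTP : forall i j, measurable_fun setT (fun x => WTP x i j).
Hypothesis mgamma : forall i, measurable_fun setT (fun x => gamma x i).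

Let measurable_WTP_jbar i : measurable_fun setT (fun x => WTP x i (jbar x)).
Proof. exact: (measurable_fun_at_index jbar (fun x => WTP x i) mjbar). Qed.

Lemma measurable_neglog_dil_pred :
  measurable_fun setT (fun x => neglog (dil_pred TII WTP x (jbar x))).
Proof.
apply: measurable_neglog; apply: measurable_sum => i.
exact: measurable_funM.
Qed.

Lemma measurable_H_WTP : measurable_fun setT (H_WTP WTP gamma jbar).
Proof.
apply: emeasurable_sum => i; apply: emeasurable_funM.
  exact/measurable_EFinP.
exact: measurable_neglog.
Qed.

Lemma measurable_H_TII : measurable_fun setT (H_TII TII gamma).
Proof.
apply: emeasurable_sum => i; apply: emeasurable_funM.
  exact/measurable_EFinP.
exact: measurable_neglog.
Qed.

Lemma integral_neglog_dil_pred_le (mu : {measure set T -> \bar R}) :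
  \int[mu]_x neglog (dil_pred TII WTP x (jbar x)) <=
  \int[mu]_x H_WTP WTP gamma jbar x + \int[mu]_x H_TII TII gamma x.
Proof.
apply: ge0_le_integralD.
- by move=> x; rewrite neglog_ge0 ?dil_pred_le1.
- exact: H_WTP_ge0.
- exact: H_TII_ge0.
- exact: measurable_neglog_dil_pred.
- exact: measurable_H_WTP.
- exact: measurable_H_TII.
- exact: neglog_dil_pred_le.
Qed.

End dil.

Theorem theorem4 (R : realType) (d : measure_display) (T : measurableType d)
  (mu : probability T R) (t m : nat) (ht : (1 <= t)%N) (hm : (1 <= m)%N)
  (ibar : T -> 'I_t) (jbar : T -> 'I_m)
  (TII : T -> 'I_t -> R) (WTP : T -> 'I_t -> 'I_m -> R) (TAP : T -> 'I_m -> R)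
  (gamma : T -> 'I_t -> R)
  (mibar : forall i, measurable (ibar @^-1` [set i]))
  (mjbar : forall j, measurable (jbar @^-1` [set j]))
  (mTII : forall i, measurable_fun setT (fun x => TII x i))
  (mWTP : forall i j, measurable_fun setT (fun x => WTP x i j))
  (mTAP : forall j, measurable_fun setT (fun x => TAP x j))
  (mgamma : forall i, measurable_fun setT (fun x => gamma x i))
  (dTII : forall x, is_distr (TII x))
  (dWTP : forall x i, is_distr (WTP x i))
  (dTAP : forall x, is_distr (TAP x))
  (dgamma : forall x, is_distr (gamma x))
  (delta eps eta : R) (hdelta : 0 <= delta) (heps : 0 <= eps) (heta : 0 <= eta) :
  (\int[mu]_x H_WTP WTP gamma jbar x <= delta%:E)%E ->
  (\int[mu]_x H_TII TII gamma x <= eps%:E)%E ->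
  (\int[mu]_x H_TAP TAP jbar x <= eta%:E)%E ->
  (0 <= loss_error mu TII WTP TAP jbar)%E /\
  (loss_error mu TII WTP TAP jbar <= maxe (delta + eps + ln t%:R)%:E eta%:E)%E.
Proof.
move=> int_WTP_le int_TII_le int_TAP_le; rewrite /loss_error; split.
  rewrite le_max; apply/orP; left; apply: integral_ge0 => x _.
  by rewrite neglog_ge0 ?dil_pred_le1.
apply: le_max2 => //.
have ln_t_ge0 : 0 <= ln (t%:R : R) by rewrite ln_ge0 ?ler1n.
apply: (le_trans (integral_neglog_dil_pred_le _ _ _ _ dTII dWTP dgamma mjbar mTII mWTP mgamma mu)).
by rewrite !EFinD lee_paddr ?lee_fin // leeD.
Qed.
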